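(* Let $P,Q,R$ be unary predicate symbols and $S$ a $0$-ary predicate symbol, and let $$\Gamma = \forall x\, \exists y\, (Py \wedge (Qy \rightarrow Rx)) \wedge \neg \forall x\, Rx, \qquad \Delta = \forall x\, (Px \rightarrow (Qx \vee S)) \rightarrow S.$$ Let $\mathcal M=\langle W,\le,v_0,D,\phi\rangle$ be a G-model (interpreting $P$ and $Q$) with base point $v_0$. Then: 1. $v_0\Vdash\exists R\,\Gamma$ if and only if $\mathcal M$ satisfies $I(P,Q)$: for every $w\in W$ there is $a\in D$ with $v_0\Vdash P\mathbf a$ and $w\not\Vdash Q\mathbf a$. 2. $v_0\Vdash\forall S\,\Delta$ if and only if $\mathcal M$ satisfies $J(P,Q)$: for every $w\in W$ there is $a\in D$ with $w\Vdash P\mathbf a$ and $w\not\Vdash Q\mathbf a$.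
   Context: $\neg A$ abbreviates $A\rightarrow\perp$. A G-model is $\mathcal{M}=\langle W,\le,v_0,D,\phi\rangle$: $W$ a nonempty set of states, $\le$ a reflexive transitive relation on $W$, $v_0\in W$ with $v_0\le v$ for all $v\in W$, $D$ a nonempty domain, and for each $k$-ary predicate symbol $P$ a set $\phi(P)\subseteq W\times D^k$ that is monotone: if $v\le w$ and $\langle v,a_1,\dots,a_k\rangle\in\phi(P)$ then $\langle w,a_1,\dots,a_k\rangle\in\phi(P)$. Forcing between states and sentences with constants $\mathbf a$ for elements $a\in D$: $v\Vdash P\mathbf a_1\dots\mathbf a_k$ iff $\langle v,a_1,\dots,a_k\rangle\in\phi(P)$; $\wedge,\vee$ are evaluated pointwise; $v\Vdash A\rightarrow B$ iff for all $w\ge v$, $w\Vdash A$ implies $w\Vdash B$; $\perp$ is never forced; $v\Vdash\exists x A$ iff $v\Vdash A[\mathbf a/x]$ for some $a\in D$; $v\Vdash\forall xA$ iff $v\Vdash A[\mathbf a/x]$ for all $a\in D$. Second-order quantifiers: $v\Vdash\exists R\,A$ iff there is a monotone $R'\subseteq W\times D$ such that $v\Vdash A$ in the model obtained by interpreting $R$ as $R'$; $v\Vdash\forall S\,A$ iff for every upward-closed $S'\subseteq W$, $v\Vdash A$ in the model obtained by interpreting the propositional letter $S$ as $S'$. *)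

Set Implicit Arguments.

Inductive usym : Type := sP | sQ | sR.

(* Sentences with constants for domain elements; quantifiers are
   represented by their instances A[a/x] (higher-order abstract syntax). *)
Inductive form (D : Type) : Type :=
| FAt1 : usym -> D -> form D
| FS   : form D
| FBot : form D
| FAnd : form D -> form D -> form D
| FOr  : form D -> form D -> form D
| FImp : form D -> form D -> form D
| FEx  : (D -> form D) -> form D
| FAll : (D -> form D) -> form D.

Arguments FS {D}. Arguments FBot {D}.

Definition FNeg (D : Type) (A : form D) : form D := FImp A FBot.

Record GModel : Type := {
  W   : Type;
  le  : W -> W -> Prop;
  le_refl  : forall v, le v v;
  le_trans : forall u v w, le u v -> le v w -> le u w;
  v0  : W;
  v0_least : forall v, le v0 v;
  Dom : Type;
  Dom_nonempty : inhabited Dom;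
  phi1 : usym -> W -> Dom -> Prop;
  phi1_mono : forall s v w a, le v w -> phi1 s v a -> phi1 s w a;
  phi0 : W -> Prop;
  phi0_mono : forall v w, le v w -> phi0 v -> phi0 w
}.

Fixpoint forcesI {M : GModel} (i1 : usym -> W M -> Dom M -> Prop)
  (i0 : W M -> Prop) (v : W M) (A : form (Dom M)) : Prop :=
  match A with
  | FAt1 s a => i1 s v a
  | FS => i0 v
  | FBot => False
  | FAnd B C => forcesI i1 i0 v B /\ forcesI i1 i0 v C
  | FOr B C => forcesI i1 i0 v B \/ forcesI i1 i0 v C
  | FImp B C => forall w, le M v w -> forcesI i1 i0 w B -> forcesI i1 i0 w C
  | FEx F => exists a, forcesI i1 i0 v (F a)
  | FAll F => forall a, forcesI i1 i0 v (F a)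
  end.

Definition forces {M : GModel} (v : W M) (A : form (Dom M)) : Prop :=
  forcesI (phi1 M) (phi0 M) v A.

Definition monotone_rel {M : GModel} (R' : W M -> Dom M -> Prop) : Prop :=
  forall v w a, le M v w -> R' v a -> R' w a.
Definition upward_closed {M : GModel} (S' : W M -> Prop) : Prop :=
  forall v w, le M v w -> S' v -> S' w.

Definition setR {M : GModel} (R' : W M -> Dom M -> Prop) : usym -> W M -> Dom M -> Prop :=
  fun s => match s with sR => R' | _ => phi1 M s end.

Definition forces_exR {M : GModel} (v : W M) (A : form (Dom M)) : Prop :=
  exists R' : W M -> Dom M -> Prop,
    monotone_rel R' /\ forcesI (setR R') (phi0 M) v A.

Definition forces_allS {M : GModel} (v : W M) (A : form (Dom M)) : Prop :=
  forall S' : W M -> Prop, upward_closed S' -> forcesI (phi1 M) S' v A.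

Definition Gamma (D : Type) : form D :=
  FAnd (FAll (fun x => FEx (fun y =>
           FAnd (FAt1 sP y) (FImp (FAt1 sQ y) (FAt1 sR x)))))
       (FNeg (FAll (fun x => FAt1 sR x))).

Definition Delta (D : Type) : form D :=
  FImp (FAll (fun x => FImp (FAt1 sP x) (FOr (FAt1 sQ x) FS))) FS.

Definition I_PQ (M : GModel) : Prop :=
  forall w : W M, exists a : Dom M,
    forces (v0 M) (FAt1 sP a) /\ ~ forces w (FAt1 sQ a).

Definition J_PQ (M : GModel) : Prop :=
  forall w : W M, exists a : Dom M,
    forces w (FAt1 sP a) /\ ~ forces w (FAt1 sQ a).

From Stdlib Require Import Classical.

(* Part 1: the relation R w x := (v0 ||- P x -> w ||- Q x) is monotone and
   realises Gamma exactly when I(P,Q) holds.  Part 2: the upward-closed set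
   "not below w" is the most demanding interpretation of S at w; it fails
   Delta at v0 unless J(P,Q) holds at w. *)

Section GammaDelta.

Variable M : GModel.

Lemma Gamma_forced_I_PQ (R' : W M -> Dom M -> Prop) :
  forcesI (setR R') (phi0 M) (v0 M) (Gamma (Dom M)) -> I_PQ M.
Proof.
  simpl; intros [HPQR HnR] w.
  assert (exists x, ~ R' w x) as [x Hx].
  { apply not_all_ex_not; exact (HnR w (v0_least M w)). }
  destruct (HPQR x) as [y [HPy HQR]].
  exists y; split; [exact HPy |].
  intro HQy; exact (Hx (HQR w (v0_least M w) HQy)).
Qed.

Definition root_P_imp_Q (w : W M) (x : Dom M) : Prop :=
  phi1 M sP (v0 M) x -> phi1 M sQ w x.

Lemma monotone_root_P_imp_Q : monotone_rel root_P_imp_Q.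
Proof.
  intros v w x Hvw HR HPx; exact (phi1_mono M _ _ _ _ Hvw (HR HPx)).
Qed.

Lemma I_PQ_forces_Gamma :
  I_PQ M -> forcesI (setR root_P_imp_Q) (phi0 M) (v0 M) (Gamma (Dom M)).
Proof.
  intros HI; simpl; split.
  - intro x; destruct (classic (phi1 M sP (v0 M) x)) as [HPx | HnPx].
    + exists x; split; [exact HPx |]; intros w _ HQx _; exact HQx.
    + destruct (HI (v0 M)) as [y [HPy _]].
      exists y; split; [exact HPy |]; intros w _ _ HPx; contradiction.
  - intros w _ HR; destruct (HI w) as [a [HPa HnQa]].
    exact (HnQa (HR a HPa)).
Qed.

Definition not_below (w u : W M) : Prop := ~ le M u w.

Lemma upward_closed_not_below (w : W M) : upward_closed (not_below w).
Proof.
  intros u u' Huu' Hu Hu'w; exact (Hu (le_trans M _ _ _ Huu' Hu'w)).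
Qed.

Lemma Delta_forced_not_below_J (v w : W M) :
  le M v w -> forcesI (phi1 M) (not_below w) v (Delta (Dom M)) ->
  exists a, phi1 M sP w a /\ ~ phi1 M sQ w a.
Proof.
  simpl; intros Hvw HDelta; apply NNPP; intro HnJ.
  apply (HDelta w Hvw); [| apply le_refl].
  intros x u Hwu HPux.
  destruct (classic (le M u w)) as [Huw | Huw]; [left | right; exact Huw].
  apply (phi1_mono M _ _ _ _ Hwu); apply NNPP; intro HnQ.
  exact (HnJ (ex_intro _ x (conj (phi1_mono M _ _ _ _ Huw HPux) HnQ))).
Qed.

Lemma J_PQ_forces_Delta (S' : W M -> Prop) (v : W M) :
  J_PQ M -> forcesI (phi1 M) S' v (Delta (Dom M)).
Proof.
  intros HJ w _ HPQS; destruct (HJ w) as [a [HPa HnQa]].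
  destruct (HPQS a w (le_refl M w) HPa) as [HQa | HS]; [contradiction | exact HS].
Qed.

End GammaDelta.

Theorem lemma3p2 (M : GModel) :
  (forces_exR (v0 M) (Gamma (Dom M)) <-> I_PQ M) /\
  (forces_allS (v0 M) (Delta (Dom M)) <-> J_PQ M).
Proof.
  split; split.
  - intros [R' [_ HGamma]]; exact (Gamma_forced_I_PQ M R' HGamma).
  - intro HI; exists (root_P_imp_Q M); split.
    + exact (monotone_root_P_imp_Q M).
    + exact (I_PQ_forces_Gamma M HI).
  - intros HDelta w.
    exact (Delta_forced_not_below_J M _ _ (v0_least M w)
             (HDelta _ (upward_closed_not_below M w))).
  - intros HJ S' _; exact (J_PQ_forces_Delta M S' (v0 M) HJ).
Qed.
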